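(* Let $A$ be a finite totally ordered alphabet, $w\in A^{n}$ ($n\ge1$), $\pi=\pi(w)$ its standard permutation, $l$ the lcm of the cycle lengths of $\pi$, and $T(w)$ the table of $w$. For $i\in[n]$ let $r=r(i)$ be the length of the cycle of $\pi$ containing $i$, let $u=u(i)$ be the $i$-th row of $T(w)$ and let $x$ be the prefix of $u$ of length $r$. Then: (i) $x$ is the root of $u$ (so $x$ is primitive and $u=x^{l/r}$); (ii) every conjugate $y$ of $x$ occurs as the root of some row of $T(w)$, and the number of rows with root $y$ equals the number of rows with root $x$; (iii) the rows of $T(w)$ are in lexicographic (nondecreasing) order from top to bottom; (iv) the final column of $T(w)$, read from top to bottom, is $w$.
   Context: $[n]=\{0<1<\cdots<n-1\}$. Standard permutation: let $f(w)$ be the letters of $w$ sorted in nondecreasing order; for each letter $a$ occurring in $w$, $\pi_{a}$ is the unique order-preserving injective partial map on $[n]$ whose domain is the set of positions (indexed from $0$) of $a$ in $f(w)$ and whose range is the set of positions of $a$ in $w$; $\pi(w)=\bigcup_{a}\pi_{a}$, a permutation of $[n]$. Maps are composed left to right and $i\cdot\phi$ denotes the image of $i$. For $u=b_{1}\cdots b_{m}$ put $\pi_{u}=\pi_{b_{1}}\cdots\pi_{b_{m}}$; for each $i$ and $m$ there is a unique $u\in A^{m}$ with $i\cdot\pi_{u}$ defined. The table $T(w)$ is the $n\times l$ array whose $i$-th row ($i\in[n]$) is the unique $u\in A^{l}$ such that $i\cdot\pi_{u}$ is defined. The root of a word $u$ is the shortest $x$ with $u=x^{t}$, $t\ge1$;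 a word is primitive if not a proper power; $xy$ and $yx$ are conjugates. *)

From HB Require Import structures.
From mathcomp Require Import all_boot all_order.
From mathcomp Require Import boolp.
Unset Printing Implicit Defensive.
Import Order.TTheory.
Local Open Scope order_scope.

Section Table.
Context {d : Order.disp_t} {A : finOrderType d}.

Definition positions (a : A) (s : seq A) : seq nat :=
  [seq p.2 | p <- zip s (iota 0 (size s)) & p.1 == a].

Definition fsort (w : seq A) : seq A := sort <=%O w.

(* pi_a : the unique order-preserving injective partial map from the positions
   of a in f(w) onto the positions of a in w (None = undefined) *)
Definition pi_letter (w : seq A) (a : A) (j : nat) : option nat :=
  let dom := positions a (fsort w) in
  let rg := positions a w in
  if j \in dom then Some (nth 0 rg (index j dom)) else None.

(* pi(w) = union of the pi_a (their domains are disjoint) *)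
Definition stdperm_nat (w : seq A) (j : nat) : option nat :=
  if [pick a | pi_letter w a j != None] is Some a then pi_letter w a j else None.

Definition stdperm (w : seq A) (j : 'I_(size w)) : 'I_(size w) :=
  insubd j (odflt 0 (stdperm_nat w j)).

Definition cyclen (w : seq A) (i : 'I_(size w)) : nat := order (stdperm w) i.

Definition lcm_cycles (w : seq A) : nat :=
  \big[lcmn/1]_(i < size w) cyclen w i.

(* i . pi_u, composing left to right *)
Definition pi_word (w : seq A) (u : seq A) (i : nat) : option nat :=
  foldl (fun acc b => obind (pi_letter w b) acc) (Some i) u.

(* i-th row of the table T(w): the unique u in A^l with i . pi_u defined *)
Definition table_row (w : seq A) (i : nat) : seq A :=
  if [pick u : (lcm_cycles w).-tuple A | pi_word w u i != None] is Some u
  then val u else [::].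

Definition wpow (x : seq A) (t : nat) : seq A := flatten (nseq t x).

Definition is_root (x u : seq A) : Prop :=
  (exists2 t, 0 < t & u = wpow x t) /\
  (forall y t, 0 < t -> u = wpow y t -> size x <= size y).

Definition primitive (x : seq A) : Prop :=
  forall y t, x = wpow y t -> t = 1.

Definition conjugate (x y : seq A) : Prop :=
  exists s t, x = s ++ t /\ y = t ++ s.

Fixpoint lexle (s t : seq A) : bool :=
  match s, t with
  | [::], _ => true
  | _ :: _, [::] => false
  | a :: s', b :: t' => (a < b) || ((a == b) && lexle s' t')
  end.

End Table.

From HB Require Import structures.
From mathcomp Require Import all_boot all_order.
From mathcomp Require Import boolp.
Import Order.TTheory.

(* Row [i] of T(w) is the itinerary of [i] under sigma = pi(w), labelled by f(w): its
   k-th letter is f(w) read at sigma^k(i), because pi_a is defined exactly on the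
   positions of f(w) carrying [a]. On each letter class sigma is increasing, so two
   points with the same itinerary keep their relative order under every iterate; inside
   one cycle this is impossible (look at the iterate where the smaller point reaches the
   top of the cycle), so distinct points of a cycle have distinct itineraries. Hence a
   period [s] of row [i] forces sigma^s(i) = i, which makes the prefix of length r the
   root; rotating row [i] by [s] gives row sigma^s(i), which carries roots to conjugate
   roots injectively; sortedness of f(w) and monotonicity of sigma give the
   lexicographic order; and the last letter of row [i] is f(w)[sigma^(l-1)(i)] =
   w[sigma^l(i)] = w[i]. *)

Section Iterates.
Context {T : Type} {f : T -> T}.

Lemma inj_iter m : injective f -> injective (iter m f).
Proof. by move=> f_inj; elim: m => //= m IH x y /f_inj/IH. Qed.

Lemma iter_muln_fixed {m x} : iter m f x = x -> forall q, iter (q * m) f x = x.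
Proof. by move=> fix_x; elim=> //= q IH; rewrite mulSn iterD IH fix_x. Qed.

Lemma iter_modn_fixed {m x} :
  iter m f x = x -> forall k, iter k f x = iter (k %% m) f x.
Proof. by move=> fix_x k; rewrite {1}(divn_eq k m) addnC iterD iter_muln_fixed. Qed.

End Iterates.

Section OrbitOrder.
Variables (T : finType) (f : T -> T).
Hypothesis f_inj : injective f.

Lemma order_dvdn_iter m x : (order f x %| m) = (iter m f x == x).
Proof.
apply/idP/eqP => [/dvdnP[q ->] | fix_x].
  exact: iter_muln_fixed (iter_order f_inj x) q.
have o_gt0 := order_gt0 f x.
rewrite /dvdn -(findex_iter (ltn_pmod m o_gt0)).
by rewrite -(iter_modn_fixed (iter_order f_inj x) m) fix_x findex0.
Qed.

Lemma order_iter m x : order f (iter m f x) = order f x.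
Proof.
apply: eq_card => y.
by rewrite !inE (same_connect (fconnect_sym f_inj) (fconnect_iter f m x)).
Qed.

End OrbitOrder.

Section MkseqPeriodic.
Variable T : Type.
Implicit Type g : nat -> T.

Lemma mkseq_cons g m : mkseq g m.+1 = g 0 :: mkseq (g \o succn) m.
Proof. by rewrite /mkseq /= -[1]addn0 iotaDl -map_comp. Qed.

Lemma mkseqD g a b : mkseq g (a + b) = mkseq g a ++ mkseq (fun k => g (a + k)) b.
Proof. by rewrite /mkseq iotaD map_cat add0n -[a]addn0 iotaDl -map_comp addn0. Qed.

Lemma take_mkseq g s m : s <= m -> take s (mkseq g m) = mkseq g s.
Proof. by move=> le_sm; rewrite /mkseq -map_take take_iota (minn_idPl le_sm). Qed.

Lemma rot_mkseq_periodic g s m : s <= m -> (forall k, g (k + m) = g k) ->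
  rot s (mkseq g m) = mkseq (fun k => g (k + s)) m.
Proof.
move=> le_sm g_per.
rewrite -[in LHS](subnKC le_sm) mkseqD -{1}[s](size_mkseq g s) rot_size_cat.
rewrite -[in RHS](subnK le_sm) mkseqD; congr (_ ++ _); apply: eq_mkseq => k /=.
  by rewrite addnC.
by rewrite addnAC subnK // addnC g_per.
Qed.

Lemma periodic_modn {g m} :
  (forall k, g (k + m) = g k) -> forall k, g k = g (k %% m).
Proof.
move=> g_per k; rewrite {1}(divn_eq k m).
by elim: (k %/ m) => [|q IH]; rewrite ?add0n // mulSn -addnA addnC g_per.
Qed.

Lemma eq_mkseq_periodic g1 g2 m : 0 < m ->
    (forall k, g1 (k + m) = g1 k) -> (forall k, g2 (k + m) = g2 k) ->
  mkseq g1 m = mkseq g2 m -> g1 =1 g2.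
Proof.
move=> m_gt0 g1_per g2_per eq_g12 k.
rewrite (periodic_modn g1_per) (periodic_modn g2_per).
have lt_km := ltn_pmod k m_gt0.
by rewrite -(nth_mkseq (g1 0) g1 lt_km) eq_g12 nth_mkseq.
Qed.

End MkseqPeriodic.

Definition itinerary {T X : Type} (c : T -> X) (f : T -> T) (x : T) (k : nat) : X :=
  c (iter k f x).

Lemma itinerary_iter {T X : Type} (c : T -> X) f x s k :
  itinerary c f (iter s f x) k = itinerary c f x (k + s).
Proof. by rewrite /itinerary iterD. Qed.

Lemma itinerary_periodic {T X : Type} (c : T -> X) f x m :
  iter m f x = x -> forall k, itinerary c f x (k + m) = itinerary c f x k.
Proof. by move=> fix_x k; rewrite -itinerary_iter fix_x. Qed.

Lemma mkseq_itineraryS {T X : Type} (c : T -> X) f x m :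
  mkseq (itinerary c f x) m.+1 = c x :: mkseq (itinerary c f (f x)) m.
Proof.
rewrite mkseq_cons; congr (_ :: _).
by apply: eq_mkseq => k; rewrite /= -addn1 -itinerary_iter.
Qed.

Section ItineraryInjective.
Context {n : nat} {X : Type} {c : 'I_n -> X} {f : 'I_n -> 'I_n}.
Hypothesis f_inj : injective f.
Hypothesis f_mono : forall a b : 'I_n, a < b -> c a = c b -> f a < f b.

Lemma itinerary_lt (a b : 'I_n) k :
  a < b -> itinerary c f a =1 itinerary c f b -> iter k f a < iter k f b.
Proof. by move=> lt_ab eq_ab; elim: k => //= k IH; apply: f_mono IH (eq_ab k). Qed.

(* Take the iterate sending [a] to the largest point [z] of its orbit: the same iterate
   sends [b] to a point of that orbit strictly above [z]. *)
Lemma itinerary_fconnect_leq (a b : 'I_n) :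
  fconnect f a b -> itinerary c f a =1 itinerary c f b -> b <= a.
Proof.
move=> ab eq_ab; rewrite leqNgt; apply/negP => lt_ab.
have [z az z_max] := @arg_maxnP _ a (fconnect f a) val (connect0 _ a).
have z_ge : iter (findex f a z) f b <= z.
  exact/z_max/(connect_trans ab (fconnect_iter f _ b)).
have := itinerary_lt a b (findex f a z) lt_ab eq_ab.
by rewrite iter_findex // ltnNge z_ge.
Qed.

Lemma itinerary_fconnect_inj (a b : 'I_n) :
  fconnect f a b -> itinerary c f a =1 itinerary c f b -> a = b.
Proof.
move=> ab eq_ab; apply/val_inj/eqP.
rewrite eqn_leq (itinerary_fconnect_leq a b ab eq_ab) andbT.
by apply: itinerary_fconnect_leq => [|k]; rewrite 1?(fconnect_sym f_inj) ?eq_ab.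
Qed.

End ItineraryInjective.

Section ItineraryLex.
Context {d : Order.disp_t} {A : finOrderType d} {n : nat}.
Context {c : 'I_n -> A} {f : 'I_n -> 'I_n}.
Hypothesis c_homo : {homo c : a b / a <= b >-> (a <= b)%O}.
Hypothesis f_mono : forall a b : 'I_n, a < b -> c a = c b -> f a < f b.

Lemma lexle_itinerary m (a b : 'I_n) :
  a <= b -> lexle (mkseq (itinerary c f a) m) (mkseq (itinerary c f b) m).
Proof.
elim: m a b => // m IH a b le_ab; rewrite !mkseq_itineraryS /=.
have := c_homo a b le_ab; rewrite le_eqVlt => /orP[/eqP eq_cab | -> //].
rewrite eq_cab eqxx ltxx /=; apply: IH.
move: le_ab; rewrite leq_eqVlt => /orP[/eqP/val_inj-> // | lt_ab].
exact/ltnW/f_mono.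
Qed.

End ItineraryLex.

Section WordPowers.
Context {d : Order.disp_t} {A : finOrderType d}.
Implicit Types x y p q u : seq A.

Lemma wpowS x t : wpow x t.+1 = x ++ wpow x t.
Proof. by []. Qed.

Lemma wpowD x a b : wpow x (a + b) = wpow x a ++ wpow x b.
Proof. by rewrite /wpow nseqD flatten_cat. Qed.

Lemma size_wpow x t : size (wpow x t) = t * size x.
Proof. by rewrite /wpow size_flatten /shape map_nseq sumn_nseq mulnC. Qed.

Lemma wpowM x s t : wpow (wpow x s) t = wpow x (s * t).
Proof. by elim: t => [|t IH]; rewrite ?muln0 // mulnS wpowD -IH. Qed.

Lemma take_wpow x t : 0 < t -> take (size x) (wpow x t) = x.
Proof. by case: t => // t _; rewrite take_size_cat. Qed.

Lemma rot_wpow_cat p q t : rot (size p) (wpow (p ++ q) t) = wpow (q ++ p) t.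
Proof.
have shift s : p ++ wpow (q ++ p) s = wpow (p ++ q) s ++ p.
  by elim: s => [|s IH]; rewrite ?cats0 // !wpowS -!catA IH.
case: t => [|t]; first by rewrite rot_oversize.
by rewrite !wpowS -catA rot_size_cat -catA -shift catA.
Qed.

Lemma rot_wpow x t : rot (size x) (wpow x t) = wpow x t.
Proof. by have := rot_wpow_cat x [::] t; rewrite cats0. Qed.

Lemma wpow_mkseq (g : nat -> A) r t : (forall k, g (k + r) = g k) ->
  wpow (mkseq g r) t = mkseq g (t * r).
Proof.
move=> g_per; elim: t => [|t IH] //.
rewrite wpowS IH mulSn mkseqD; congr (_ ++ _).
by apply: eq_mkseq => k; rewrite addnC g_per.
Qed.

Lemma is_root_unique {x y u} : is_root x u -> is_root y u -> x = y.
Proof.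
move=> [[s s_gt0 u_xs] x_min] [[t t_gt0 u_yt] y_min].
have le_xy : size x <= size y := x_min y t t_gt0 u_yt.
have le_yx : size y <= size x := y_min x s s_gt0 u_xs.
have size_xy : size x = size y by apply/eqP; rewrite eqn_leq le_xy.
by rewrite -(take_wpow x s s_gt0) -u_xs size_xy u_yt take_wpow.
Qed.

Lemma is_root_primitive x u : is_root x u -> 0 < size x -> primitive x.
Proof.
move=> [[s s_gt0 u_xs] x_min] x_gt0 y [|t] x_yt; first by rewrite x_yt in x_gt0.
have y_gt0 : 0 < size y by move: x_gt0; rewrite x_yt size_wpow muln_gt0 => /andP[].
have u_y : u = wpow y (t.+1 * s) by rewrite u_xs x_yt wpowM.
have ts_gt0 : 0 < t.+1 * s by rewrite muln_gt0; exact: s_gt0.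
have := x_min y _ ts_gt0 u_y; rewrite x_yt size_wpow leEnat.
rewrite mulSn -[leqRHS]addn0 leq_add2l leqn0 muln_eq0.
by rewrite (negbTE (lt0n_neq0 y_gt0)) orbF => /eqP ->.
Qed.

End WordPowers.

Section Positions.
Context {d : Order.disp_t} {A : finOrderType d}.
Implicit Types (s : seq A) (a : A).

Lemma positionsE a s : positions a s = [seq j <- iota 0 (size s) | nth a s j == a].
Proof.
rewrite /positions -[X in zip X _](mkseq_nth a s) -[X in zip _ X]map_id zip_map.
by rewrite filter_map -map_comp map_id.
Qed.

Lemma mem_positions x0 a s j :
  (j \in positions a s) = (j < size s) && (nth x0 s j == a).
Proof.
rewrite positionsE mem_filter mem_iota andbC.
by case: ltnP => // lt_js; rewrite (set_nth_default x0).
Qed.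

Lemma sorted_positions a s : sorted ltn (positions a s).
Proof. by rewrite positionsE; apply/sorted_filter/iota_ltn_sorted/ltn_trans. Qed.

Lemma size_positions a s : size (positions a s) = count_mem a s.
Proof.
rewrite positionsE size_filter -[in RHS](mkseq_nth a s) count_map.
by apply: eq_count => j; rewrite /= eq_sym.
Qed.

End Positions.

Section StandardPermutation.
Context {d : Order.disp_t} {A : finOrderType d}.
Variables (w : seq A) (x0 : A).
Local Notation n := (size w).
Local Notation sigma := (stdperm w).
Let fw (j : 'I_n) : A := nth x0 (fsort w) j.

Let size_fsort : size (fsort w) = n := size_sort _ w.

Lemma pi_letterE a j : pi_letter w a j =
  if (j < n) && (nth x0 (fsort w) j == a)
  then Some (nth 0 (positions a w) (index j (positions a (fsort w)))) else None.
Proof. by rewrite /pi_letter (mem_positions x0) size_fsort. Qed.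

Let stdval j := let a := nth x0 (fsort w) j in
  nth 0 (positions a w) (index j (positions a (fsort w))).

Lemma stdperm_natE (j : 'I_n) : stdperm_nat w j = pi_letter w (fw j) j.
Proof.
rewrite /stdperm_nat; case: pickP => [a | none]; last first.
  by have := none (fw j); rewrite pi_letterE ltn_ord eqxx.
by rewrite !pi_letterE ltn_ord eqxx /=; case: (fw j =P a) => [<-|].
Qed.

Lemma mem_positions_fsort (j : 'I_n) : (j : nat) \in positions (fw j) (fsort w).
Proof. by rewrite (mem_positions x0) size_fsort ltn_ord eqxx. Qed.

Lemma index_positions_fsort (j : 'I_n) :
  index (j : nat) (positions (fw j) (fsort w)) < size (positions (fw j) w).
Proof.
rewrite size_positions -(count_sort <=%O) -size_positions index_mem.
exact: mem_positions_fsort.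
Qed.

Lemma stdvalP (j : 'I_n) : stdval j < n /\ nth x0 w (stdval j) = fw j.
Proof.
move/(mem_nth 0): (index_positions_fsort j).
by rewrite (mem_positions x0) => /andP[lt_n /eqP].
Qed.

Lemma stdpermE (j : 'I_n) : val (sigma j) = stdval j.
Proof.
rewrite /stdperm stdperm_natE pi_letterE ltn_ord eqxx /= insubdK //.
by case: (stdvalP j).
Qed.

Lemma nth_stdperm (j : 'I_n) : nth x0 w (sigma j) = fw j.
Proof. by rewrite stdpermE; case: (stdvalP j). Qed.

Lemma pi_letter_stdperm a (j : 'I_n) :
  pi_letter w a j = if fw j == a then Some (val (sigma j)) else None.
Proof. by rewrite pi_letterE ltn_ord stdpermE; case: eqP => // <-. Qed.

Lemma stdperm_mono (j k : 'I_n) : j < k -> fw j = fw k -> sigma j < sigma k.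
Proof.
move=> lt_jk eq_jk; rewrite !stdpermE /stdval /=.
have j_dom := mem_positions_fsort j; have k_dom := mem_positions_fsort k.
have k_rank := index_positions_fsort k.
rewrite /fw in eq_jk j_dom k_dom k_rank; rewrite -eq_jk in k_dom k_rank *.
set P := positions _ (fsort w) in j_dom k_dom k_rank *.
have lt_rank : index (j : nat) P < index (k : nat) P.
  rewrite ltnNge; apply: contraTN lt_jk => le_kj; rewrite -leqNgt.
  have P_sorted : sorted leq P := sub_sorted (@ltnW) (sorted_positions _ _).
  exact: (sorted_leq_index leq_trans leqnn P_sorted _ _ k_dom j_dom le_kj).
apply: (sorted_ltn_nth ltn_trans 0 (sorted_positions _ _)) => //.
by rewrite inE (ltn_trans lt_rank).
Qed.

Lemma stdperm_inj : injective sigma.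
Proof.
move=> j k eq_jk; have eq_fw : fw j = fw k by rewrite -!nth_stdperm eq_jk.
case: (ltngtP j k) => [lt_jk | lt_kj | /val_inj //].
  by have := stdperm_mono j k lt_jk eq_fw; rewrite eq_jk ltnn.
by have := stdperm_mono k j lt_kj (esym eq_fw); rewrite eq_jk ltnn.
Qed.

Lemma pi_word_cons b u j :
  pi_word w (b :: u) j = obind (pi_word w u) (pi_letter w b j).
Proof. by rewrite /pi_word /=; case: pi_letter => //=; elim: u. Qed.

Lemma pi_word_itinerary u (i : 'I_n) :
  (pi_word w u i != None) = (u == mkseq (itinerary fw sigma i) (size u)).
Proof.
elim: u i => // b u IH i.
rewrite pi_word_cons pi_letter_stdperm mkseq_itineraryS eqseq_cons -/(size u).
rewrite [b == _]eq_sym.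
by case: (fw i =P b) => //= _; apply: IH.
Qed.

Lemma table_rowE (i : 'I_n) :
  table_row w i = mkseq (itinerary fw sigma i) (lcm_cycles w).
Proof.
rewrite /table_row; case: pickP => [u | none].
  by rewrite pi_word_itinerary size_tuple => /eqP.
have size_row : size (mkseq (itinerary fw sigma i) (lcm_cycles w)) == lcm_cycles w.
  by rewrite size_mkseq.
by have := none (Tuple size_row); rewrite pi_word_itinerary size_mkseq eqxx.
Qed.

Local Notation l := (lcm_cycles w).

Lemma cyclen_dvdn_lcm (i : 'I_n) : cyclen w i %| l.
Proof. exact: biglcmn_sup. Qed.

Lemma lcm_cycles_gt0 : 0 < l.
Proof.
rewrite /lcm_cycles; elim/big_ind: _ => // [r s r_gt0 s_gt0 | i _]; last exact: order_gt0.
by rewrite lcmn_gt0 r_gt0.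
Qed.

Lemma cyclen_leq_lcm (i : 'I_n) : cyclen w i <= l.
Proof. exact: dvdn_leq lcm_cycles_gt0 (cyclen_dvdn_lcm i). Qed.

Lemma lcm_div_cyclen_gt0 (i : 'I_n) : 0 < l %/ cyclen w i.
Proof. by rewrite divn_gt0 ?cyclen_leq_lcm // order_gt0. Qed.

Lemma cyclen_iter s (i : 'I_n) : cyclen w (iter s sigma i) = cyclen w i.
Proof. exact: order_iter stdperm_inj s i. Qed.

Lemma iter_lcm_cycles (i : 'I_n) : iter l sigma i = i.
Proof. by apply/eqP; rewrite -order_dvdn_iter ?cyclen_dvdn_lcm //; exact: stdperm_inj. Qed.

Lemma itinerary_lcm_periodic (i : 'I_n) k :
  itinerary fw sigma i (k + l) = itinerary fw sigma i k.
Proof. exact/itinerary_periodic/iter_lcm_cycles. Qed.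

Lemma rot_table_row s (i : 'I_n) :
  s <= l -> rot s (table_row w i) = table_row w (iter s sigma i).
Proof.
move=> le_sl; rewrite !table_rowE rot_mkseq_periodic //; last exact: itinerary_lcm_periodic.
by apply: eq_mkseq => k; rewrite itinerary_iter.
Qed.

Lemma table_row_fconnect_inj (i j : 'I_n) :
  fconnect sigma i j -> table_row w i = table_row w j -> i = j.
Proof.
rewrite !table_rowE => ij eq_row.
apply: (itinerary_fconnect_inj stdperm_inj stdperm_mono) ij _.
apply: eq_mkseq_periodic lcm_cycles_gt0 _ _ eq_row; exact: itinerary_lcm_periodic.
Qed.

Lemma take_table_row (i : 'I_n) :
  take (cyclen w i) (table_row w i) = mkseq (itinerary fw sigma i) (cyclen w i).
Proof. by rewrite table_rowE take_mkseq ?cyclen_leq_lcm. Qed.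

Lemma table_row_wpow (i : 'I_n) :
  table_row w i = wpow (take (cyclen w i) (table_row w i)) (l %/ cyclen w i).
Proof.
rewrite take_table_row wpow_mkseq ?divnK ?cyclen_dvdn_lcm ?table_rowE //.
exact/itinerary_periodic/(iter_order stdperm_inj).
Qed.

Lemma cyclen_leq_wpow (i : 'I_n) y t :
  0 < t -> table_row w i = wpow y t -> cyclen w i <= size y.
Proof.
move=> t_gt0 row_yt.
have l_ty : l = t * size y by rewrite -size_wpow -row_yt table_rowE size_mkseq.
have y_gt0 : 0 < size y by move: lcm_cycles_gt0; rewrite l_ty muln_gt0 => /andP[].
apply: dvdn_leq y_gt0 _; rewrite /cyclen order_dvdn_iter; last exact: stdperm_inj.
apply/eqP/esym/table_row_fconnect_inj; first exact: fconnect_iter.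
by rewrite -rot_table_row ?l_ty ?leq_pmull // row_yt rot_wpow.
Qed.

Lemma is_root_table_row (i : 'I_n) :
  is_root (take (cyclen w i) (table_row w i)) (table_row w i).
Proof.
split; first by exists (l %/ cyclen w i); [exact: lcm_div_cyclen_gt0 | exact: table_row_wpow].
move=> y t t_gt0 row_yt; rewrite take_table_row size_mkseq.
exact: cyclen_leq_wpow t_gt0 row_yt.
Qed.

Lemma is_root_table_row_rot (i : 'I_n) p q :
  is_root (p ++ q) (table_row w i) ->
  is_root (q ++ p) (table_row w (iter (size p) sigma i)).
Proof.
move=> root_pq; have x_pq := is_root_unique (is_root_table_row i) root_pq.
have r_pq : cyclen w i = size (q ++ p).
  by rewrite size_cat addnC -size_cat -x_pq take_table_row size_mkseq.
have le_pl : size p <= l.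
  by rewrite (leq_trans _ (cyclen_leq_lcm i)) // r_pq size_cat leq_addl.
have := is_root_table_row (iter (size p) sigma i).
rewrite cyclen_iter -rot_table_row // table_row_wpow x_pq rot_wpow_cat {1}r_pq take_wpow //.
exact: lcm_div_cyclen_gt0.
Qed.

Lemma card_is_root_rot p q :
  #|[set j : 'I_n | `[< is_root (p ++ q) (table_row w j) >]]| <=
  #|[set j : 'I_n | `[< is_root (q ++ p) (table_row w j) >]]|.
Proof.
rewrite -(card_imset _ (inj_iter (size p) stdperm_inj)).
apply/subset_leq_card/subsetP => _ /imsetP[j + ->]; rewrite !inE => /asboolP root_j.
exact/asboolP/is_root_table_row_rot.
Qed.

Lemma nth_fsort_homo : {homo fw : j k / j <= k >-> (j <= k)%O}.
Proof.
move=> j k le_jk; apply: (sorted_leq_nth le_trans lexx x0 (sort_sorted le_total w));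
  by rewrite ?inE ?size_fsort.
Qed.

Lemma lexle_table_row (i j : 'I_n) : i <= j -> lexle (table_row w i) (table_row w j).
Proof. by rewrite !table_rowE; apply: (lexle_itinerary nth_fsort_homo stdperm_mono). Qed.

Lemma drop_table_row (i : 'I_n) : drop l.-1 (table_row w i) = [:: nth x0 w i].
Proof.
rewrite table_rowE -(prednK lcm_cycles_gt0) mkseqS -cats1 drop_size_cat ?size_mkseq //.
by rewrite /itinerary -nth_stdperm -iterS prednK ?lcm_cycles_gt0 ?iter_lcm_cycles.
Qed.

End StandardPermutation.

Theorem proposition1p2p9 (d : Order.disp_t) (A : finOrderType d) (w : seq A)
  (Hn : 0 < size w) :
  let n := size w in
  let l := lcm_cycles w in
  [/\ (* (i) *)
      (forall i : 'I_n,
         let r := cyclen w i in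
         let u := table_row w i in
         let x := take r u in
         [/\ is_root x u, primitive x & u = wpow x (l %/ r)]),
      (* (ii) *)
      (forall i : 'I_n,
         let x := take (cyclen w i) (table_row w i) in
         forall y, conjugate x y ->
           (exists j : 'I_n, is_root y (table_row w j)) /\
           #|[set j : 'I_n | `[< is_root y (table_row w j) >]]| =
           #|[set j : 'I_n | `[< is_root x (table_row w j) >]]|),
      (* (iii) *)
      (forall i j : 'I_n, (i <= j)%N -> lexle (table_row w i) (table_row w j))
    & (* (iv) *)
      [seq drop l.-1 (table_row w i) | i <- iota 0 n] = [seq [:: a] | a <- w]].
Proof.
have x0 : A by case: w Hn => // a _; exact: a.
move=> n l; split.
- move=> i r u x; split; [exact: is_root_table_row | | exact: table_row_wpow].
  apply: is_root_primitive (is_root_table_row w x0 i) _.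
  by rewrite (take_table_row w x0) size_mkseq; exact: order_gt0.
- move=> i x y [p [q [x_pq ->]]].
  have root_pq : is_root (p ++ q) (table_row w i).
    by rewrite -x_pq; exact: is_root_table_row.
  split; first by exists (iter (size p) (stdperm w) i); exact: is_root_table_row_rot.
  by apply/eqP; rewrite x_pq eqn_leq !card_is_root_rot.
- exact: lexle_table_row.
- rewrite -[in RHS](mkseq_nth x0 w) /mkseq -map_comp.
  apply/eq_in_map => i; rewrite mem_iota => /andP[_ lt_in].
  exact: (drop_table_row w x0 (Ordinal lt_in)).
Qed.
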